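(* In the setting below, if $C$ is Euclidean LCD, then $g(x)$ is self-reciprocal.
   Context: Let $q$ be a prime power, $F=\mathbb{F}_q$, $m\ge1$ with $\gcd(q,m)=1$, and $R=F[x]/\langle x^m-1\rangle$; elements of $R$ are represented by polynomials of degree $<m$ and identified with their coefficient vectors in $F^m$. A quasi-cyclic code of length $2m$ and index $2$ is an $R$-submodule $C\subseteq R^2$. The Euclidean inner product of $(a_1,a_2),(b_1,b_2)\in R^2$ is the sum of the standard dot products of the coefficient vectors of $a_1,b_1$ and of $a_2,b_2$; $C$ is Euclidean LCD if $C\cap C^{\perp_e}=\{0\}$. For a nonzero polynomial $f$ of degree $k$, $f^*(x)=x^kf(x^{-1})$; $f$ is self-reciprocal if $f^*=\alpha f$ for some $\alpha\in F$. Suppose $C$ is generated as an $R$-module by $(g_{11}(x),g_{12}(x))$ and $(0,g_{22}(x))$, where $g_{11},g_{12},g_{22}\in F[x]$ satisfy: $g_{11}\mid x^m-1$, $g_{22}\mid x^m-1$, $\deg g_{12}<\deg g_{22}$, and $g_{11}g_{22}\mid (x^m-1)g_{12}$. Let $g=\gcd(g_{11},g_{22})$. *)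

From HB Require Import structures.
From mathcomp Require Import all_boot all_order all_algebra all_field.
Set Implicit Arguments. Unset Strict Implicit. Unset Printing Implicit Defensive.
Import GRing.Theory.
Local Open Scope ring_scope.

(* Elements of R = F[x]/<x^m - 1> are represented by polynomials of degree < m,
   i.e. canonical remainders modulo x^m - 1. *)
Definition xm1 (F : fieldType) (m : nat) : {poly F} := 'X^m - 1.

Definition qc_code (F : fieldType) (m : nat) (g11 g12 g22 : {poly F})
    (c : {poly F} * {poly F}) : Prop :=
  exists a b : {poly F},
    c.1 = (a * g11) %% xm1 F m /\ c.2 = (a * g12 + b * g22) %% xm1 F m.

Definition eucl_ip (F : fieldType) (m : nat) (c d : {poly F} * {poly F}) : F :=
  \sum_(i < m) (c.1)`_i * (d.1)`_i + \sum_(i < m) (c.2)`_i * (d.2)`_i.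

Definition inR2 (F : fieldType) (m : nat) (c : {poly F} * {poly F}) : Prop :=
  (size c.1 <= m)%N /\ (size c.2 <= m)%N.

Definition eucl_dual (F : fieldType) (m : nat)
    (C : {poly F} * {poly F} -> Prop) (d : {poly F} * {poly F}) : Prop :=
  inR2 m d /\ forall c, C c -> eucl_ip m c d = 0.

Definition eucl_LCD (F : fieldType) (m : nat)
    (C : {poly F} * {poly F} -> Prop) : Prop :=
  forall c, C c -> eucl_dual m C c -> c = (0, 0).

(* Reciprocal f*(x) = x^k f(x^{-1}), k = deg f. *)
Definition recip (F : fieldType) (f : {poly F}) : {poly F} :=
  \poly_(i < size f) f`_(size f - 1 - i).

Definition self_reciprocal (F : fieldType) (f : {poly F}) : Prop :=
  f != 0 /\ exists alpha : F, recip f = alpha *: f.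

From HB Require Import structures.
From mathcomp Require Import all_boot all_order all_algebra all_field.
From mathcomp Require Import fingroup cyclic zify ring.
Set Implicit Arguments. Unset Strict Implicit. Unset Printing Implicit Defensive.
Import GRing.Theory.
Local Open Scope ring_scope.

(* Write g = gcd(g11, g22), g* = recip g and H = (x^m - 1) / g*.  Since
   x^m - 1 is separable and g11 g22 | (x^m - 1) g12, g also divides g12, so
   every codeword is a multiple of g modulo x^m - 1.  The Euclidean product
   of u and v is a coefficient of u(x) v(x^-1) in R, and g(x) H(x^-1) = 0 in
   R because g(x) is x^k g*(x^-1); hence every (H A, H B) lies in the dual of
   C.  The codewords (0, H g22) and (H g11, H g12) are therefore self-
   orthogonal, LCD forces them to vanish, i.e. g* divides g11 and g22, hence
   g; as g and g* have the same degree, g* is a scalar multiple of g. *)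

Section Reversal.
Variable F : fieldType.
Implicit Types (f g : {poly F}) (n : nat).

Definition revp n f : {poly F} := \poly_(i < n) f`_(n.-1 - i).

Lemma coef_revp n f i : (revp n f)`_i = if (i < n)%N then f`_(n.-1 - i) else 0.
Proof. exact: coef_poly. Qed.

Fact revp_is_semilinear n : semilinear (revp n).
Proof.
by split=> [a f|f g]; apply/polyP => i;
  rewrite !(coefD, coefZ, coef_revp); case: ifP; rewrite ?(mulr0, addr0).
Qed.

HB.instance Definition _ n :=
  GRing.isSemilinear.Build F {poly F} {poly F} *:%R (revp n) (revp_is_semilinear n).

Lemma revpXn n k : (k < n)%N -> revp n 'X^k = 'X^(n.-1 - k).
Proof.
move=> lt_kn; apply/polyP => i; rewrite coef_revp !coefXn.
case: ltnP => hi; last by case: eqP => // ?; lia.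
by case: eqP => ?; case: eqP => ? //; lia.
Qed.

Lemma poly_sum_ord n f : (size f <= n)%N -> f = \sum_(i < n) f`_i *: 'X^i.
Proof.
move=> le_fn; rewrite -poly_def; apply/polyP => i; rewrite coef_poly.
by case: ltnP => // le_ni; rewrite nth_default // (leq_trans le_fn).
Qed.

Lemma revpE n f : (size f <= n)%N -> revp n f = \sum_(i < n) f`_i *: 'X^(n.-1 - i).
Proof.
move=> le_fn; rewrite {1}(poly_sum_ord le_fn) linear_sum.
by apply: eq_bigr => i _; rewrite linearZ /= revpXn.
Qed.

Lemma revpM a b f g : (0 < a)%N -> (0 < b)%N -> (size f <= a)%N -> (size g <= b)%N ->
  revp (a + b).-1 (f * g) = revp a f * revp b g.
Proof.
move=> a_gt0 b_gt0 le_fa le_gb.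
rewrite {1}(poly_sum_ord le_fa) {1}(poly_sum_ord le_gb) (revpE le_fa) (revpE le_gb).
rewrite !mulr_suml linear_sum; apply: eq_bigr => i _.
rewrite !mulr_sumr linear_sum; apply: eq_bigr => j _.
rewrite -scalerAl -scalerAr scalerA linearZ /= -scalerAl -scalerAr scalerA -!exprD.
have lt_ia := ltn_ord i; have lt_jb := ltn_ord j.
by rewrite revpXn; [congr (_ *: 'X^_) | ]; lia.
Qed.

Lemma revpK n f : (size f <= n)%N -> revp n (revp n f) = f.
Proof.
move=> le_fn; apply/polyP => i; rewrite !coef_revp.
case: ltnP => [lt_in | le_ni]; last by rewrite nth_default // (leq_trans le_fn).
by rewrite ifT; [congr f`_ _ |]; lia.
Qed.

Lemma recip_revp f : recip f = revp (size f) f.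
Proof. by apply/polyP => i; rewrite coef_poly coef_revp subn1. Qed.

Lemma size_recip f : f`_0 != 0 -> size (recip f) = size f.
Proof. by move=> f0_neq0; rewrite size_poly_eq // subn1 subnn. Qed.

Lemma self_reciprocal_dvdp f : f`_0 != 0 -> recip f %| f -> self_reciprocal f.
Proof.
move=> f0_neq0 rf_f; have f_neq0 : f != 0 by apply: contraNneq f0_neq0 => ->; rewrite coef0.
split=> //; have /eqpP [[c1 c2] /= /andP [c1_neq0 _] Ec] : recip f %= f.
  by rewrite -dvdp_size_eqp // size_recip.
by exists (c2 / c1); rewrite -[recip f]scale1r -(mulVf c1_neq0) -scalerA Ec scalerA mulrC.
Qed.

Lemma coefM_revp n (u v : {poly F}) : (size v <= n.+1)%N ->
  (u * revp n.+1 v)`_n = \sum_(i < n.+1) u`_i * v`_i.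
Proof.
move=> le_vn; rewrite coefM; apply: eq_bigr => i _; rewrite coef_revp.
have lt_in := ltn_ord i.
by rewrite ifT; [congr (_ * v`_ _) |]; lia.
Qed.

End Reversal.

Section Congruence.
Variables (F : fieldType) (d : {poly F}).
Implicit Types p q r : {poly F}.

Definition eqmodp p q := d %| p - q.

Lemma eqmodp_refl p : eqmodp p p.
Proof. by rewrite /eqmodp subrr dvdp0. Qed.

Lemma eqmodp_trans q p r : eqmodp p q -> eqmodp q r -> eqmodp p r.
Proof. by move=> dpq dqr; rewrite /eqmodp -(subrKA q) dvdp_add. Qed.

Lemma eqmodpM p q p' q' : eqmodp p p' -> eqmodp q q' -> eqmodp (p * q) (p' * q').
Proof.
move=> dp dq; rewrite /eqmodp (_ : _ - _ = q * (p - p') + p' * (q - q')); last by ring.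
by rewrite dvdp_add ?dvdp_mull.
Qed.

Lemma eqmodp_modp p : eqmodp (p %% d) p.
Proof.
by rewrite /eqmodp {2}(divp_eq p d) opprD addrCA subrr addr0 dvdpNr dvdp_mull.
Qed.

Lemma eqmodp0 p : eqmodp p 0 = (d %| p).
Proof. by rewrite /eqmodp subr0. Qed.

End Congruence.

Lemma gcdp_dvdp_separable (F : fieldType) (p g11 g12 g22 : {poly F}) :
  separable_poly p -> g11 %| p -> g11 * g22 %| p * g12 -> gcdp g11 g22 %| g12.
Proof.
move=> sep_p g11_p g_code; set g := gcdp g11 g22.
have /dvdpP [h p_hg] : g %| p := dvdp_trans (dvdp_gcdl _ _) g11_p.
have g_neq0 : g != 0.
  by apply: contraTneq (separable_poly_neq0 sep_p) => g_eq0; rewrite p_hg g_eq0 mulr0 eqxx.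
have coprime_gh : coprimep g h by apply: (separable_coprime sep_p); rewrite p_hg mulrC.
rewrite -(Gauss_dvdpr _ coprime_gh) -(dvdp_mul2r _ _ g_neq0).
apply: dvdp_trans (dvdp_mul (dvdp_gcdl _ _) (dvdp_gcdr _ _)) _.
by rewrite mulrAC -p_hg.
Qed.

Section CyclicDual.
Variables (F : fieldType) (m : nat).
Hypothesis m_gt0 : (0 < m)%N.
Local Notation xm := (xm1 F m).
Local Notation conjp p := (p \Po 'X^(m.-1)).

Lemma size_xm : size xm = m.+1.
Proof. by rewrite /xm1 -polyC1 size_XnsubC. Qed.

Lemma xm_neq0 : xm != 0.
Proof. by rewrite -size_poly_eq0 size_xm. Qed.

Lemma size_modp_xm (p : {poly F}) : (size (p %% xm)%R <= m)%N.
Proof. by rewrite -ltnS -size_xm ltn_modp xm_neq0. Qed.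

Lemma xm_dvd_XnM_sub1 k : xm %| 'X^(m * k) - 1.
Proof. by rewrite exprM subrX1 dvdp_mulr. Qed.

Lemma xm_dvd_conjp_xm : xm %| conjp xm.
Proof.
by rewrite /xm1 comp_polyB comp_Xn_poly comp_polyC -exprM mulnC xm_dvd_XnM_sub1.
Qed.

Lemma eqmodp_conjp (p q : {poly F}) : eqmodp xm p q -> eqmodp xm (conjp p) (conjp q).
Proof.
by case/dvdpP => r pq; rewrite /eqmodp -comp_polyB pq comp_polyM dvdp_mull // xm_dvd_conjp_xm.
Qed.

(* Modulo x^m - 1, x^(m-1) is the inverse of x: conjp is the involution
   x |-> x^-1 of R, and reversal is conjugation up to a power of x. *)
Lemma revp_eqmodp_conjp n (p : {poly F}) : (0 < n)%N -> (size p <= n)%N ->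
  eqmodp xm (revp n p) ('X^(n.-1) * conjp p).
Proof.
move=> n_gt0 le_pn; rewrite /eqmodp (revpE le_pn) {2}(poly_sum_ord le_pn).
rewrite linear_sum mulr_sumr -sumrB.
apply: (big_ind (fun r => xm %| r)) => [|r s|i _]; [exact: dvdp0 | exact: dvdp_add |].
have lt_in := ltn_ord i.
rewrite /= comp_polyZ comp_Xn_poly -exprM -scalerAr -scalerBr -exprD -mul_polyC dvdp_mull //.
rewrite (_ : (n.-1 + m.-1 * i = n.-1 - i + m * i)%N); last by nia.
rewrite exprD -[X in X - _]mulr1 -mulrBr dvdp_mull //.
by rewrite -dvdpNr opprB xm_dvd_XnM_sub1.
Qed.

Lemma coef_modp_xm (p : {poly F}) :
  (size p <= (m + m).-1)%N -> (p %% xm)`_(m.-1) = p`_(m.-1).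
Proof.
move=> le_p; rewrite {2}(divp_eq p xm) coefD /xm1 mulrBr mulr1 coefB coefMXn.
have -> : (p %/ xm)`_(m.-1) = 0.
  by rewrite nth_default // size_divp ?xm_neq0 // size_xm leq_subLR (leq_trans le_p); lia.
by rewrite ltn_predL m_gt0 subrr add0r.
Qed.

Lemma dotp_coef_modp (u v : {poly F}) : (size u <= m)%N -> (size v <= m)%N ->
  \sum_(i < m) u`_i * v`_i = ((u * revp m v) %% xm)`_(m.-1).
Proof.
move=> le_um le_vm; rewrite -(prednK m_gt0) -coefM_revp ?prednK // coef_modp_xm //.
apply: leq_trans (size_polyMleq _ _) _; have := size_poly m (fun i => v`_(m.-1 - i)).
rewrite -/(revp m v); lia.
Qed.

Lemma xm_dvd_mul_revp (g H C w : {poly F}) : xm %| g * conjp H -> g %| w ->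
  xm %| (w %% xm) * revp m ((H * C) %% xm).
Proof.
move=> xm_gH /dvdpP [w' ->]; rewrite -eqmodp0.
apply: (eqmodp_trans (eqmodpM (eqmodp_modp _ _) (revp_eqmodp_conjp m_gt0 (size_modp_xm _)))).
apply: (eqmodp_trans (eqmodpM (eqmodp_refl _ _) (eqmodpM (eqmodp_refl _ _)
  (eqmodp_conjp (eqmodp_modp _ _))))).
rewrite eqmodp0 comp_polyM.
have -> : w' * g * ('X^(m.-1) * (conjp H * conjp C)) =
  g * conjp H * (w' * 'X^(m.-1) * conjp C) by ring.
exact: dvdp_mulr.
Qed.

Lemma eucl_ip_modp_eq0 (g H A B w1 w2 : {poly F}) : xm %| g * conjp H ->
  g %| w1 -> g %| w2 -> eucl_ip m (w1 %% xm, w2 %% xm) ((H * A) %% xm, (H * B) %% xm) = 0.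
Proof.
move=> xm_gH g_w1 g_w2; rewrite /eucl_ip /= !dotp_coef_modp ?size_modp_xm //.
by rewrite -coefD -modpD modp_eq0 ?coef0 // dvdp_add // (xm_dvd_mul_revp _ xm_gH).
Qed.

Lemma xm_nroot0 : ~~ root xm 0.
Proof. by rewrite rootE /xm1 !hornerE expr0n gtn_eqF // sub0r oppr_eq0 oner_eq0. Qed.

Lemma separable_xm : m%:R != 0 :> F -> separable_poly xm.
Proof.
move=> m_neq0; rewrite unlock /xm1 derivB derivXn derivC subr0 -scaler_nat.
by rewrite coprimepZr // coprimep_expr // coprimepX xm_nroot0.
Qed.

Lemma revp_xm : revp m.+1 xm = - xm.
Proof.
apply/polyP => i; rewrite coef_revp coefN /xm1 !coefB !coefXn !coef1 /=.
case: ltnP => [lt_im | le_mi]; last first.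
  have -> : (i == m) = false by case: eqP => ? //; lia.
  have -> : (i == 0)%N = false by case: eqP => ? //; lia.
  by rewrite subrr oppr0.
have -> : (m - i == m)%N = (i == 0)%N by case: eqP => ?; case: eqP => ? //; lia.
have -> : (m - i == 0)%N = (i == m) by case: eqP => ?; case: eqP => ? //; lia.
by rewrite opprB.
Qed.

Lemma recip_dvdp_xm g : g %| xm -> recip g %| xm.
Proof.
case/dvdpP => h xm_hg; have /andP [h_neq0 g_neq0] : (h != 0) && (g != 0).
  by rewrite -negb_or -mulf_eq0 -xm_hg xm_neq0.
have := @revpM _ (size h) (size g) h g; rewrite !size_poly_gt0 h_neq0 g_neq0.
move=> /(_ isT isT (leqnn _) (leqnn _)).
rewrite -size_mul // -xm_hg size_xm revp_xm recip_revp => /(canRL (@opprK _)) ->.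
by rewrite dvdpNr dvdp_mull.
Qed.

Lemma coef0_neq0_dvdp_xm g : g %| xm -> g`_0 != 0.
Proof.
move=> g_xm; apply: contraNneq xm_nroot0 => g0_eq0.
by apply: root_dvdp g_xm _; rewrite rootE horner_coef0 g0_eq0.
Qed.

(* g = revp n (recip g) is congruent to x^(n-1) times the conjugate of
   recip g, which cancels against the conjugate of xm %/ recip g. *)
Lemma xm_dvd_mul_conjp_recip g : g %| xm -> xm %| g * conjp (xm %/ recip g).
Proof.
move=> g_xm; have size_rg := size_recip (coef0_neq0_dvdp_xm g_xm).
have g_gt0 : (0 < size g)%N.
  by rewrite size_poly_gt0; apply: contraTneq g_xm => ->; rewrite dvd0p xm_neq0.
have g_cong : eqmodp xm g ('X^((size g).-1) * conjp (recip g)).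
  rewrite {1}(_ : g = revp (size g) (recip g)); last by rewrite recip_revp revpK.
  by apply: revp_eqmodp_conjp; rewrite ?size_rg.
rewrite -eqmodp0; apply: eqmodp_trans (eqmodpM g_cong (eqmodp_refl _ _)) _.
rewrite eqmodp0 -mulrA -comp_polyM [recip g * _]mulrC divpK ?recip_dvdp_xm //.
by rewrite dvdp_mull // xm_dvd_conjp_xm.
Qed.

Lemma dvdp_xm_mul_divp P A : P %| xm -> (xm %| xm %/ P * A) = (P %| A).
Proof.
move=> P_xm; have H_neq0 : xm %/ P != 0.
  by apply: contraNneq xm_neq0 => H_eq0; rewrite -(divpK P_xm) H_eq0 mul0r.
by rewrite -{1}(divpK P_xm) dvdp_mul2l.
Qed.

Section QuasiCyclicCode.
Variables g11 g12 g22 : {poly F}.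
Local Notation C := (qc_code m g11 g12 g22).
Local Notation g := (gcdp g11 g22).

Lemma qc_code_dual H A B : xm %| g * conjp H -> g %| g12 ->
  eucl_dual m C ((H * A) %% xm, (H * B) %% xm).
Proof.
move=> xm_gH g_g12; split; first by split; apply: size_modp_xm.
move=> [c1 c2] [a [b [/= -> ->]]]; apply: (eucl_ip_modp_eq0 A B xm_gH).
  by rewrite dvdp_mull ?dvdp_gcdl.
by rewrite dvdp_add ?dvdp_mull ?dvdp_gcdr.
Qed.

Hypotheses (m_neq0 : m%:R != 0 :> F) (g11_xm : g11 %| xm).
Hypothesis g_code : g11 * g22 %| xm * g12.

Lemma recip_gcdp_dvdp_of_LCD : eucl_LCD m C -> recip g %| g.
Proof.
move=> LCD; set H := xm %/ recip g.
have g_xm : g %| xm := dvdp_trans (dvdp_gcdl _ _) g11_xm.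
have g_g12 := gcdp_dvdp_separable (separable_xm m_neq0) g11_xm g_code.
have in_dual A B := qc_code_dual A B (xm_dvd_mul_conjp_recip g_xm) g_g12.
have recip_dvdp A B : C ((H * A) %% xm, (H * B) %% xm) -> recip g %| A /\ recip g %| B.
  move=> /(LCD _)/(_ (in_dual A B)) [/modp_eq0P + /modp_eq0P].
  by rewrite !dvdp_xm_mul_divp ?recip_dvdp_xm.
have [_ rg_g22] : recip g %| 0 /\ recip g %| g22.
  by apply: recip_dvdp; exists 0, H; rewrite !mul0r mulr0 add0r.
have [rg_g11 _] : recip g %| g11 /\ recip g %| g12.
  by apply: recip_dvdp; exists H, 0; rewrite mul0r addr0.
by rewrite dvdp_gcd rg_g11 rg_g22.
Qed.

End QuasiCyclicCode.

Lemma self_reciprocal_gcdp_of_LCD (g11 g12 g22 : {poly F}) : m%:R != 0 :> F ->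
  g11 %| xm -> g11 * g22 %| xm * g12 ->
  eucl_LCD m (qc_code m g11 g12 g22) -> self_reciprocal (gcdp g11 g22).
Proof.
move=> m_neq0 g11_xm g_code LCD.
have g_xm : gcdp g11 g22 %| xm := dvdp_trans (dvdp_gcdl _ _) g11_xm.
apply: self_reciprocal_dvdp (coef0_neq0_dvdp_xm g_xm) _.
exact: recip_gcdp_dvdp_of_LCD m_neq0 g11_xm g_code LCD.
Qed.

End CyclicDual.

Lemma natf_neq0_coprime_card (F : finFieldType) (m : nat) :
  coprime #|F| m -> m%:R != 0 :> F.
Proof.
move=> cop; have [p p_pr pchar_p] := finPcharP F.
have card_eq0 : #|F|%:R == 0 :> F.
  by have := expg_cardG (in_setT (1 : F)); rewrite FinRing.zmodXgE cardsT => ->.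
rewrite -(dvdn_pcharf pchar_p) -(dvdn_pcharf pchar_p) in card_eq0 *.
apply/negP => p_m; have : (p %| gcdn #|F| m)%N by rewrite dvdn_gcd card_eq0 p_m.
by rewrite (eqP cop) dvdn1 => /eqP p_eq1; rewrite p_eq1 in p_pr.
Qed.

Theorem lemma3p2 (F : finFieldType) (m : nat) (g11 g12 g22 : {poly F}) :
  (0 < m)%N ->
  coprime #|F| m ->
  g11 %| xm1 F m ->
  g22 %| xm1 F m ->
  (size g12 < size g22)%N ->
  (g11 * g22) %| (xm1 F m * g12) ->
  eucl_LCD m (qc_code m g11 g12 g22) ->
  self_reciprocal (gcdp g11 g22).
Proof.
move=> m_gt0 cop g11_xm _ _.
exact: (@self_reciprocal_gcdp_of_LCD F m m_gt0 _ _ _ (natf_neq0_coprime_card cop) g11_xm).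
Qed.
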